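(* Let $d\ge2$ and let $K\subset\mathbb R^d$ be a convex polytope with $2d$ corners, namely the convex hull of the endpoints of its $d$ diameters, with diameters $0<l_d\le\dots\le l_1<\infty$ (i.e. $D_K^{(i)}=l_i$). Then there exists a box $B\subset K$ which is congruent to $\prod_{i=1}^d[0,2^{-2(d-1)}l_i]$.
   Context: Diameters of a convex body: for a convex body $K\subset\mathbb R^d$, $D_K^{(1)}:=\operatorname{diam}(K)=\max\{|x-y|:x,y\in K\}$, with orientation $p_K^{(1)}=\frac{x-y}{|x-y|}$ for a maximizing pair $x,y$. Let $H_{p^{(1)}_K}$ be the hyperplane through the origin perpendicular to $p^{(1)}_K$ and $D_K^{(2)}:=\operatorname{diam}(P_{H_{p^{(1)}_K}}(K))$, $P_H$ orthogonal projection onto $H$, with orientation $p^{(2)}_K\in H_{p^{(1)}_K}$; iteratively, $H_{p^{(i)}_K}$ is the hyperplane within $H_{p^{(i-1)}_K}$ perpendicular to $p^{(i)}_K$, and $D_K^{(i+1)}:=\operatorname{diam}(P_{H_{p^{(i)}_K}}(K))$. The $2d$ ''corners'' of the polytope are the endpoints (in $K$) of the segments realizing these $d$ diameters, and $K$ is their convex hull. *)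

From HB Require Import structures.
From mathcomp Require Import all_boot all_order all_algebra.
From mathcomp Require Import boolp classical_sets reals.
Set Implicit Arguments. Unset Strict Implicit. Unset Printing Implicit Defensive.
Import Order.TTheory GRing.Theory Num.Theory.
Local Open Scope ring_scope.
Local Open Scope classical_set_scope.

Definition dotv {R : realType} {d : nat} (u v : 'rV[R]_d) : R :=
  \sum_(i < d) u 0 i * v 0 i.
Definition enorm {R : realType} {d : nat} (v : 'rV[R]_d) : R :=
  Num.sqrt (dotv v v).

(* Orthogonal projection onto the orthogonal complement of
   span(p 0, ..., p (k-1)), written for a family p that is orthonormal
   (which the diameter construction below guarantees). *)
Definition projperp {R : realType} {d : nat} (p : 'I_d -> 'rV[R]_d) (k : nat)
    (v : 'rV[R]_d) : 'rV[R]_d :=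
  v - \sum_(j < d | (j < k)%N) dotv v (p j) *: p j.

Definition hull2 {R : realType} {d : nat} (x y : 'I_d -> 'rV[R]_d)
    : set 'rV[R]_d :=
  [set z | exists a b : 'I_d -> R,
     (forall i, 0 <= a i) /\ (forall i, 0 <= b i) /\
     \sum_(i < d) a i + \sum_(i < d) b i = 1 /\
     z = \sum_(i < d) a i *: x i + \sum_(i < d) b i *: y i].

(* Iterated diameters: (x i, y i) are points of K whose projections onto
   H_{p^(i)} (complement of span(p 0, ..., p (i-1))) realise the diameter
   of that projection of K; l i is that diameter D_K^(i+1) and p i the
   orientation (unit vector along the projected segment). *)
Definition diameter_data {R : realType} {d : nat} (K : set 'rV[R]_d)
    (x y p : 'I_d -> 'rV[R]_d) (l : 'I_d -> R) : Prop :=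
  forall i : 'I_d,
    K (x i) /\ K (y i) /\
    (forall a b, K a -> K b ->
       enorm (projperp p i (a - b)) <= enorm (projperp p i (x i - y i))) /\
    l i = enorm (projperp p i (x i - y i)) /\
    p i = (l i)^-1 *: projperp p i (x i - y i).

Definition isometry {R : realType} {d : nat} (f : 'rV[R]_d -> 'rV[R]_d) :=
  forall u v, enorm (f u - f v) = enorm (u - v).
Definition congruent {R : realType} {d : nat} (A B : set 'rV[R]_d) :=
  exists f, isometry f /\ f @` A = B.

Definition box {R : realType} {d : nat} (s : 'I_d -> R) : set 'rV[R]_d :=
  [set z | forall i, 0 <= z 0 i <= s i].

(* For every i the corners contain the segment [y_i, x_i], whose direction is
   l_i p_i plus a combination of the earlier orientations p_0, ..., p_(i-1)
   with coefficients bounded by l_0, ..., l_(i-1), since these are components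
   of a chord of K projected onto earlier hyperplanes.  Hence the triangular
   system expressing sum_j c_j p_j through the x_i - y_i can be solved with
   coefficients growing at most by a factor 2 per step.  A box with sides s l_i
   along the frame p, centred at the barycentre of the corners, then consists of
   points barycentre + sum_i t_i/d (x_i - y_i) with |t_i| <= 1/2 as soon as
   d 2^d s <= 2, and these are convex combinations of the corners; the choice
   s = 4^-(d-1) meets this bound. *)
From Pilot Require Import Defs.
From HB Require Import structures.
From mathcomp Require Import all_boot all_order all_algebra.
From mathcomp Require Import boolp classical_sets reals.
From mathcomp Require Import ring lra.
Set Implicit Arguments. Unset Strict Implicit.
Import Order.TTheory GRing.Theory Num.Theory.
Local Open Scope ring_scope.
Local Open Scope classical_set_scope.

Section InnerProduct.
Variables (R : realType) (d : nat).
Implicit Types (u v w q : 'rV[R]_d).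

Lemma dotvC u v : dotv u v = dotv v u.
Proof. by apply: eq_bigr => i _; rewrite mulrC. Qed.

Lemma dotvDl u w v : dotv (u + w) v = dotv u v + dotv w v.
Proof. by rewrite /dotv -big_split; apply: eq_bigr => i _; rewrite mxE mulrDl. Qed.

Lemma dotvZl (a : R) u v : dotv (a *: u) v = a * dotv u v.
Proof. by rewrite /dotv mulr_sumr; apply: eq_bigr => i _; rewrite mxE mulrA. Qed.

Lemma dotvBl u w v : dotv (u - w) v = dotv u v - dotv w v.
Proof. by rewrite dotvDl -scaleN1r dotvZl mulN1r. Qed.

Lemma dotv_suml (I : Type) (r : seq I) (P : pred I) (F : I -> 'rV[R]_d) v :
  dotv (\sum_(j <- r | P j) F j) v = \sum_(j <- r | P j) dotv (F j) v.
Proof.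
apply: (big_morph (dotv^~ v)) => [a b|]; first exact: dotvDl.
by rewrite /dotv big1 // => i _; rewrite mxE mul0r.
Qed.

Lemma dotvv_ge0 v : 0 <= dotv v v.
Proof. by apply: sumr_ge0 => i _; rewrite -expr2 sqr_ge0. Qed.

Lemma enorm_sqr v : enorm v ^+ 2 = dotv v v.
Proof. by rewrite sqr_sqrtr // dotvv_ge0. Qed.

(* Cauchy-Schwarz against a unit vector, from [0 <= |v - <v,q> q|^2]. *)
Lemma normr_dotv_unit_le v q : dotv q q = 1 -> `|dotv v q| <= enorm v.
Proof.
move=> q1; rewrite /enorm -sqrtr_sqr; apply: ler_wsqrtr.
have := dotvv_ge0 (v - dotv v q *: q).
rewrite !dotvBl !dotvZl (dotvC q (v - _)) dotvBl dotvZl q1.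
rewrite (dotvC v (v - _)) dotvBl dotvZl (dotvC q v).
set a := dotv v q; set b := dotv v v; rewrite expr2 => h; nra.
Qed.

Lemma dotv_sum_orthonormal (p : 'I_d -> 'rV[R]_d) (a b : 'I_d -> R) :
  (forall i j, dotv (p i) (p j) = (i == j)%:R) ->
  dotv (\sum_j a j *: p j) (\sum_k b k *: p k) = \sum_j a j * b j.
Proof.
move=> orth; rewrite dotv_suml; apply: eq_bigr => j _.
rewrite dotvZl dotvC dotv_suml (bigD1 j) //= big1 ?addr0.
  by rewrite dotvZl orth eqxx mulr1.
by move=> k kj; rewrite dotvZl orth (negbTE kj) mulr0.
Qed.

Lemma dotv_projperp (p : 'I_d -> 'rV[R]_d) (i : nat) v (j : 'I_d) :
  (forall k j : 'I_d, (k < i)%N -> (j < i)%N -> dotv (p k) (p j) = (k == j)%:R) ->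
  (j < i)%N -> dotv (projperp p i v) (p j) = 0.
Proof.
move=> orth ji; rewrite /projperp dotvBl dotv_suml (bigD1 j) //= big1.
  by rewrite dotvZl orth // eqxx mulr1 addr0 subrr.
by move=> k /andP[ki kj]; rewrite dotvZl orth // (negbTE kj) mulr0.
Qed.

End InnerProduct.

Lemma big_ord_ltS (V : zmodType) (d : nat) (F : 'I_d -> V) (M : 'I_d) :
  \sum_(j < d | (j < M.+1)%N) F j = \sum_(j < d | (j < M)%N) F j + F M.
Proof.
rewrite (bigD1 M) //= addrC; congr (_ + _).
by apply: eq_bigl => j; rewrite ltnS leq_eqVlt -val_eqE /=; case: ltngtP.
Qed.

Lemma muln_exp2_le n : (0 < n)%N -> (n * 2 ^ n <= 2 * 2 ^ (2 * (n - 1)))%N.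
Proof.
case: n => // n _; rewrite subn1 /=.
have ltn_exp2 k : (k.+1 <= 2 ^ k)%N.
  elim: k => // k IH; rewrite expnS mul2n -addnn -addn1 -(addn1 k).
  by apply: leq_add; [rewrite addn1 | apply: leq_ltn_trans (leq0n k) IH].
apply: (@leq_trans (2 ^ n * 2 ^ n.+1)); first exact: leq_mul (ltn_exp2 n) (leqnn _).
by rewrite -expnD -expnS mul2n -addnn addnS.
Qed.

(* The box [prod_i [0, s_i]] placed with its centre at the barycentre of the
   corners and its edges along the frame [p]. *)
Definition box_embedding (R : realType) (d : nat) (x y p : 'I_d -> 'rV[R]_d)
    (s : 'I_d -> R) (z : 'rV[R]_d) : 'rV[R]_d :=
  \sum_(i < d) (2 * d%:R)^-1 *: (x i + y i) + \sum_(j < d) (z 0 j - s j / 2) *: p j.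

Lemma box_embedding_isometry (R : realType) (d : nat) (x y p : 'I_d -> 'rV[R]_d)
    (s : 'I_d -> R) :
  (forall i j, dotv (p i) (p j) = (i == j)%:R) -> Defs.isometry (box_embedding x y p s).
Proof.
move=> orth u v; rewrite /box_embedding opprD addrACA subrr add0r -sumrB.
rewrite (eq_bigr (fun j => (u 0 j - v 0 j) *: p j)); last first.
  by move=> j _; rewrite -scalerBl; congr (_ *: _); ring.
rewrite /enorm dotv_sum_orthonormal //; congr Num.sqrt.
by apply: eq_bigr => j _; rewrite !mxE.
Qed.

Lemma hull2_barycentre_shift (R : realType) (d : nat) (x y : 'I_d -> 'rV[R]_d)
    (t : 'I_d -> R) :
  (0 < d)%N -> (forall i, 2 * `|t i| <= 1) ->
  hull2 x y (\sum_(i < d) (2 * d%:R)^-1 *: (x i + y i)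
             + \sum_(i < d) (t i / d%:R) *: (x i - y i)).
Proof.
move=> d0 tb; have dR : (0 : R) < d%:R by rewrite ltr0n.
have dR0 : (d%:R : R) != 0 by rewrite gt_eqF.
have t_le i : -1 <= 2 * t i <= 1.
  by have := tb i; rewrite -ler_norml normrM ger0_norm.
have weight_ge0 (r : R) : 0 <= r -> 0 <= r / (2 * d%:R).
  by move=> r0; apply: divr_ge0 => //; apply: mulr_ge0 => //; exact: ltW.
exists (fun i => (1 + 2 * t i) / (2 * d%:R)), (fun i => (1 - 2 * t i) / (2 * d%:R)).
split; first by move=> i; apply: weight_ge0; have := t_le i; lra.
split; first by move=> i; apply: weight_ge0; have := t_le i; lra.
split.
  rewrite -big_split /= (eq_bigr (fun _ => (d%:R)^-1)); last by move=> i _; field.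
  by rewrite sumr_const card_ord -[LHS]mulr_natr mulVf.
rewrite -!big_split /=; apply: eq_bigr => i _.
by apply/rowP => k; rewrite !mxE; field.
Qed.

Section Diameters.
Variables (R : realType) (d : nat) (K : set 'rV[R]_d).
Variables (x y p : 'I_d -> 'rV[R]_d) (l : 'I_d -> R).
Hypothesis diam : diameter_data K x y p l.
Hypothesis l_gt0 : forall i, 0 < l i.

Lemma diameter_dir_unit i : dotv (p i) (p i) = 1.
Proof.
have [_ [_ [_ [li pi]]]] := diam i.
rewrite pi dotvZl dotvC dotvZl -enorm_sqr -li.
by rewrite expr2 mulKf ?mulVf // gt_eqF.
Qed.

Lemma diameter_dir_orthonormal i j : dotv (p i) (p j) = (i == j)%:R.
Proof.
suff orth_lt n (k j' : 'I_d) : (k < n)%N -> (j' < n)%N ->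
    dotv (p k) (p j') = (k == j')%:R by apply: (orth_lt d).
elim: n k j' => [//|n IH] k j'; rewrite !ltnS (leq_eqVlt k) (leq_eqVlt j').
have newest (a b : 'I_d) : val a = n -> (b < n)%N -> dotv (p a) (p b) = 0.
  move=> an bn; have [_ [_ [_ [_ pa]]]] := diam a.
  by rewrite pa dotvZl dotv_projperp ?mulr0 ?an.
case/orP=> [/eqP kn|kn]; case/orP=> [/eqP jn|jn].
- have -> : k = j' by apply: val_inj; rewrite /= kn jn.
  by rewrite eqxx diameter_dir_unit.
- by rewrite newest //; case: eqP => // kj; move: jn; rewrite -kj kn ltnn.
- by rewrite dotvC newest //; case: eqP => // kj; move: kn; rewrite kj jn ltnn.
- exact: IH.
Qed.

Lemma diameter_decomp m :
  x m - y m = \sum_(j < d | (j < m)%N) dotv (x m - y m) (p j) *: p j + l m *: p m.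
Proof.
have [_ [_ [_ [_ pm]]]] := diam m.
by rewrite pm scalerA mulfV ?gt_eqF // scale1r /projperp [RHS]addrC subrK.
Qed.

(* The component of [x m - y m] along [p j] is also its component after
   projecting onto [H_(p j)], where every chord of [K] has length at most [l j]. *)
Lemma diameter_coef_bound (m j : 'I_d) :
  (j < m)%N -> `|dotv (x m - y m) (p j)| <= l j.
Proof.
move=> jm.
have <- : dotv (projperp p j (x m - y m)) (p j) = dotv (x m - y m) (p j).
  rewrite /projperp [LHS]dotvBl dotv_suml big1 ?subr0 // => k kj.
  rewrite dotvZl diameter_dir_orthonormal.
  by case: eqP => [kj'|]; [rewrite kj' ltnn in kj | rewrite mulr0].
apply: le_trans (normr_dotv_unit_le _ (diameter_dir_unit j)) _.
have [Kxm [Kym _]] := diam m; have [_ [_ [maxj [-> _]]]] := diam j.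
exact: maxj.
Qed.

(* Back substitution in the triangular system, from the last index down. *)
Lemma diameter_frame_combination m : (m <= d)%N ->
  forall (g : R) (c : 'I_d -> R), 0 <= g ->
  (forall j : 'I_d, (j < m)%N -> `|c j| <= g * l j) ->
  exists t : 'I_d -> R, (forall i, 2 * `|t i| <= g * 2 ^+ m) /\
    \sum_(j < d | (j < m)%N) c j *: p j = \sum_(i < d | (i < m)%N) t i *: (x i - y i).
Proof.
elim: m => [_ g c g0 _|m IH md g c g0 hc].
  by exists (fun _ => 0); split; [move=> i; rewrite normr0 mulr0 expr0 mulr1 | rewrite !big_pred0].
pose M : 'I_d := Ordinal md.
pose tau := c M / l M.
have lM := l_gt0 M.
have tau_le : `|tau| <= g.
  by rewrite normrM normfV (gtr0_norm lM) ler_pdivrMr //; exact: hc.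
pose c' j := c j - tau * dotv (x M - y M) (p j).
have [t' [t'_le t'_sum]] : exists t : 'I_d -> R,
    (forall i, 2 * `|t i| <= (2 * g) * 2 ^+ m) /\
    \sum_(j < d | (j < m)%N) c' j *: p j = \sum_(i < d | (i < m)%N) t i *: (x i - y i).
  apply: IH; [exact: ltnW | lra |] => j jm.
  have h1 := hc j (ltnW jm); have h2 := diameter_coef_bound (jm : (j < M)%N).
  apply: le_trans (ler_normB _ _) _; rewrite normrM.
  have := normr_ge0 tau; have := normr_ge0 (dotv (x M - y M) (p j)).
  have := l_gt0 j; nra.
exists (fun i => if i == M then tau else t' i); split.
  move=> i; case: eqP => _; last by rewrite exprS mulrCA mulrA; apply: t'_le.
  have : (1 : R) <= 2 ^+ m by apply: exprn_ege1; lra.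
  by rewrite exprS; have := normr_ge0 tau; nra.
rewrite !(big_ord_ltS _ M) eqxx.
rewrite [in RHS](eq_bigr (fun i => t' i *: (x i - y i))); last first.
  by move=> i im; case: (i =P M) => // iM; rewrite iM ltnn in im.
rewrite -t'_sum diameter_decomp scalerDr scalerA /tau divfK ?gt_eqF // addrA.
congr (_ + _); rewrite scaler_sumr -big_split /=; apply: eq_bigr => j _.
by rewrite scalerA -scalerDl /c' subrK.
Qed.

Lemma box_embedding_in_hull2 (s : R) (z : 'rV[R]_d) :
  (0 < d)%N -> 0 <= s -> d%:R * s * 2 ^+ d <= 2 ->
  box (fun i => s * l i) z -> hull2 x y (box_embedding x y p (fun i => s * l i) z).
Proof.
move=> d0 s0 sd zbox; have dR : (0 : R) < d%:R by rewrite ltr0n.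
pose c j := d%:R * (z 0 j - s * l j / 2).
have c_le (j : 'I_d) : (j < d)%N -> `|c j| <= d%:R * s / 2 * l j.
  move=> _; have /andP[z1 z2] := zbox j; have lj := l_gt0 j.
  rewrite normrM (gtr0_norm dR) -!mulrA ler_pM2l // ler_norml; apply/andP; split; nra.
have [|t [t_le t_sum]] := diameter_frame_combination (leqnn d) _ c_le.
  by apply: divr_ge0 => //; apply: mulr_ge0 => //; exact: ltW.
have all_lt (F : 'I_d -> 'rV[R]_d) : \sum_(j < d | (j < d)%N) F j = \sum_j F j.
  by apply: eq_bigl => j; rewrite ltn_ord.
rewrite !all_lt in t_sum.
have -> : box_embedding x y p (fun i => s * l i) z
    = \sum_(i < d) (2 * d%:R)^-1 *: (x i + y i)
      + \sum_(i < d) (t i / d%:R) *: (x i - y i).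
  congr (_ + _); transitivity ((d%:R)^-1 *: \sum_(j < d) c j *: p j).
    rewrite scaler_sumr; apply: eq_bigr => j _; rewrite scalerA /c.
    by congr (_ *: _); field; rewrite gt_eqF.
  by rewrite t_sum scaler_sumr; apply: eq_bigr => i _; rewrite scalerA mulrC.
apply: hull2_barycentre_shift => // i; apply: le_trans (t_le i) _.
by rewrite mulrAC ler_pdivrMr // mul1r.
Qed.

End Diameters.

Unset Implicit Arguments.
Theorem lemma1 (R : realType) (d : nat) (K : set 'rV[R]_d)
    (x y p : 'I_d -> 'rV[R]_d) (l : 'I_d -> R) :
  (2 <= d)%N ->
  diameter_data K x y p l ->
  (forall i, 0 < l i) ->
  K = hull2 x y ->
  exists B : set 'rV[R]_d,
    B `<=` K /\
    congruent (box (fun i => (2 ^+ (2 * (d - 1)))^-1 * l i)) B.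
Proof.
move=> d2 diam l_gt0 ->.
have d0 : (0 < d)%N by apply: leq_trans d2.
set s : R := (2 ^+ (2 * (d - 1)))^-1.
have s_gt0 : 0 < s by rewrite invr_gt0 exprn_gt0.
have s_bound : d%:R * s * 2 ^+ d <= 2.
  rewrite mulrAC ler_pdivrMr ?exprn_gt0 //.
  by have := muln_exp2_le d0; rewrite -(ler_nat R) !natrM !natrX.
pose f := box_embedding x y p (fun i => s * l i).
exists (f @` box (fun i => s * l i)); split.
  by move=> _ [z zbox <-]; apply: box_embedding_in_hull2 => //; exact: ltW.
exists f; split => //; apply: box_embedding_isometry.
exact: diameter_dir_orthonormal diam l_gt0.
Qed.
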